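(* Let $\mathfrak{H}$ be a Euclidean space and let $(\mathcal{X},\mathsf{S},\gamma,(\Lambda_{a})_{a\in\mathcal{A}})$ be a spectral decomposition system for $\mathfrak{H}$ such that the set $\{\Lambda_a\}_{a\in\mathcal{A}}$ is closed in $\mathscr{L}(\mathcal{X},\mathfrak{H})$. Let $\varphi\colon\mathcal{X}\to[-\infty,+\infty]$ be $\mathsf{S}$-invariant. (i) Let $x\in\mathcal{X}$ and $a\in\mathcal{A}$, and suppose $\varphi(x)\in\mathbb{R}$. Then $\varphi\circ\gamma$ is Fréchet differentiable at $\Lambda_a x$ if and only if $\varphi$ is Fréchet differentiable at $x$, in which case $\nabla(\varphi\circ\gamma)(\Lambda_a x)=\Lambda_a(\nabla\varphi(x))$. (ii) Let $X\in\mathfrak{H}$ and suppose $\varphi(\gamma(X))\in\mathbb{R}$. Then $\varphi\circ\gamma$ is Fréchet differentiable at $X$ if and only if $\varphi$ is Fréchet differentiable at $\gamma(X)$, in which case $\nabla(\varphi\circ\gamma)(X)=\Lambda_a(\nabla\varphi(\gamma(X)))$ for every $a\in\mathcal{A}_X$.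
   Context: A Euclidean space is a finite-dimensional real Hilbert space; $\mathscr{L}(\mathcal{X},\mathfrak{H})$ carries the operator-norm topology. A spectral decomposition system for a Euclidean space $\mathfrak{H}$ is a tuple $(\mathcal{X},\mathsf{S},\gamma,(\Lambda_a)_{a\in\mathcal{A}})$ where $\mathcal{X}$ is a Euclidean space, $\mathsf{S}$ is a group acting on $\mathcal{X}$ such that each map $x\mapsto \mathsf{s}\cdot x$ is a linear isometry, $\gamma\colon\mathfrak{H}\to\mathcal{X}$ is a mapping, and each $\Lambda_a\colon\mathcal{X}\to\mathfrak{H}$ is a linear isometry, such that: [A] there exists a mapping $\tau\colon\mathcal{X}\to\mathcal{X}$ with $\tau(\mathsf{s}\cdot x)=\tau(x)$ for all $\mathsf{s},x$, $\tau(x)\in\mathsf{S}\cdot x$ for all $x$, and $\gamma\circ\Lambda_a=\tau$ for all $a\in\mathcal{A}$; [B] for every $X\in\mathfrak{H}$ there exists $a\in\mathcal{A}$ with $X=\Lambda_a\gamma(X)$; [C] $\langle X,Y\rangle\le\langle\gamma(X),\gamma(Y)\rangle$ for all $X,Y\in\mathfrak{H}$. $\mathcal{A}_X=\{a\in\mathcal{A}:X=\Lambda_a\gamma(X)\}$. A function $\varphi$ on $\mathcal{X}$ is $\mathsf{S}$-invariant if $\varphi(\mathsf{s}\cdot x)=\varphi(x)$ for all $\mathsf{s},x$. A function $f$ with $f(x)\in\mathbb{R}$ is Fréchet differentiable at $x$ if there is a (unique) $\nabla f(x)$ with $\lim_{z\to x,z\ne x}|f(z)-f(x)-\langle z-x,\nabla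 f(x)\rangle|/\|z-x\|=0$. *)

From HB Require Import structures.
From mathcomp Require Import all_boot all_order all_algebra.
From mathcomp Require Import all_classical all_reals all_analysis.
Set Implicit Arguments. Unset Strict Implicit. Unset Printing Implicit Defensive.
Import Order.TTheory GRing.Theory Num.Theory.
Import numFieldNormedType.Exports.
Local Open Scope ring_scope.
Local Open Scope classical_set_scope.

(* Euclidean spaces are modelled as R^n = 'rV[R]_n with the standard inner
   product (every Euclidean space is isometrically isomorphic to one). *)
Definition dotp (R : realType) (n : nat) (u v : 'rV[R]_n) : R :=
  \sum_(i < n) u ord0 i * v ord0 i.

Definition enorm (R : realType) (n : nat) (u : 'rV[R]_n) : R :=
  Num.sqrt (dotp u u).

(* A linear map X -> H is a matrix L : 'M_(n,m) acting by x |-> x *m L.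
   It is an isometry if it preserves the Euclidean norm. *)
Definition lin_isometry (R : realType) (n m : nat) (L : 'M[R]_(n, m)) : Prop :=
  forall x : 'rV[R]_n, enorm (x *m L) = enorm x.

Definition is_isometric_group_action (R : realType) (n : nat) (G : Type)
  (mul : G -> G -> G) (one : G) (inv : G -> G)
  (act : G -> 'rV[R]_n -> 'rV[R]_n) : Prop :=
  [/\ (forall s t u, mul s (mul t u) = mul (mul s t) u),
      (forall s, mul one s = s /\ mul s one = s),
      (forall s, mul (inv s) s = one /\ mul s (inv s) = one),
      (forall x, act one x = x) &
    [/\
      (forall s t x, act (mul s t) x = act s (act t x)),
      (forall s (c : R) x y, act s (c *: x + y) = c *: act s x + act s y)
    & (forall s x, enorm (act s x) = enorm x)]].

(* Spectral decomposition system (X = 'rV_n, S, gamma, (Lam a)_{a in A})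
   for H = 'rV_m. *)
Definition is_SDS (R : realType) (n m : nat) (G : Type)
  (mul : G -> G -> G) (one : G) (inv : G -> G)
  (act : G -> 'rV[R]_n -> 'rV[R]_n) (gamma : 'rV[R]_m -> 'rV[R]_n)
  (A : Type) (Lam : A -> 'M[R]_(n, m)) : Prop :=
  [/\ is_isometric_group_action mul one inv act,
      (forall a, lin_isometry (Lam a)),
      (* [A] *)
      (exists tau : 'rV[R]_n -> 'rV[R]_n,
         [/\ (forall s x, tau (act s x) = tau x),
             (forall x, exists s, tau x = act s x)
           & (forall a x, gamma (x *m Lam a) = tau x)]),
      (* [B] *)
      (forall X : 'rV[R]_m, exists a, X = gamma X *m Lam a)
    & (* [C] *)
      (forall X Y : 'rV[R]_m, dotp X Y <= dotp (gamma X) (gamma Y))].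

Definition S_invariant (R : realType) (n : nat) (G : Type)
  (act : G -> 'rV[R]_n -> 'rV[R]_n) (phi : 'rV[R]_n -> \bar R) : Prop :=
  forall s x, phi (act s x) = phi x.

Definition frechet_grad (R : realType) (k : nat) (f : 'rV[R]_k -> \bar R)
  (x g : 'rV[R]_k) : Prop :=
  f x \is a fin_num /\
  ((fun z => (`| f z - f x - (dotp (z - x) g)%:E | * ((enorm (z - x))^-1)%:E)%E)
     @ x^' --> (0 : \bar R)).

Definition frechet_diff (R : realType) (k : nat) (f : 'rV[R]_k -> \bar R)
  (x : 'rV[R]_k) : Prop := exists g, frechet_grad f x g.

From HB Require Import structures.
From mathcomp Require Import all_boot all_order all_algebra.
From mathcomp Require Import all_classical all_reals all_analysis.
From mathcomp Require Import ring lra.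
Import Order.TTheory GRing.Theory Num.Theory.
Import numFieldNormedType.Exports.
Local Open Scope ring_scope.
Local Open Scope classical_set_scope.
Set Implicit Arguments. Unset Strict Implicit. Unset Printing Implicit Defensive.

(* Since gamma (x Lam_a) lies in the S-orbit of x, S-invariance gives
   phi o gamma o Lam_a = phi, and Lam_a is an isometric embedding: a gradient G
   of phi o gamma at x Lam_a restricts to the gradient G Lam_a^T of phi at x.
   Conversely, let g be a gradient of phi at x, let Y be at distance d from
   x Lam_a and let e > 0. Property [A] applied to x + (d/e) g provides s in S
   with gamma ((x + (d/e) g) Lam_a) = s (x + (d/e) g), and property [C] then says
   that the point w = s^-1 gamma Y of the orbit of gamma Y satisfies
     e <Y, x Lam_a> + d <Y, g Lam_a> <= e <w, x> + d <w, g>.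
   As |w| = |Y|, this bounds |w - x|^2 by a constant times d^2 and bounds
   <w - x, g> from below by <Y - x Lam_a, g Lam_a> up to e (|w - x|^2 - d^2) / 2d;
   since phi (gamma Y) = phi w, the expansion of phi at x yields
   phi (gamma Y) - phi x - <Y - x Lam_a, g Lam_a> >= - e d. The same argument
   for -phi and -g gives the upper bound. Part (ii) is part (i) at x = gamma X,
   using [B]. *)

Section InnerProduct.
Variables (R : realType) (n : nat).
Implicit Types u v w : 'rV[R]_n.

Lemma dotpC u v : dotp u v = dotp v u.
Proof. by apply: eq_bigr => i _; rewrite mulrC. Qed.

Lemma dotpDl u v w : dotp (u + v) w = dotp u w + dotp v w.
Proof. by rewrite /dotp -big_split; apply: eq_bigr => i _; rewrite mxE mulrDl. Qed.

Lemma dotpZl (c : R) u w : dotp (c *: u) w = c * dotp u w.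
Proof. by rewrite /dotp mulr_sumr; apply: eq_bigr => i _; rewrite mxE mulrA. Qed.

Lemma dotpNl u w : dotp (- u) w = - dotp u w.
Proof. by rewrite -scaleN1r dotpZl mulN1r. Qed.

Lemma dotpBl u v w : dotp (u - v) w = dotp u w - dotp v w.
Proof. by rewrite dotpDl dotpNl. Qed.

Lemma dotp0l w : dotp 0 w = 0.
Proof. by rewrite -(subrr w) dotpBl subrr. Qed.

Lemma dotpDr u v w : dotp w (u + v) = dotp w u + dotp w v.
Proof. by rewrite dotpC dotpDl !(dotpC w). Qed.

Lemma dotpZr (c : R) u w : dotp w (c *: u) = c * dotp w u.
Proof. by rewrite dotpC dotpZl dotpC. Qed.

Lemma dotpNr u w : dotp w (- u) = - dotp w u.
Proof. by rewrite dotpC dotpNl dotpC. Qed.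

Lemma dotpBr u v w : dotp w (u - v) = dotp w u - dotp w v.
Proof. by rewrite dotpDr dotpNr. Qed.

Lemma dotp_ge0 u : 0 <= dotp u u.
Proof. by apply: sumr_ge0 => i _; rewrite -expr2 sqr_ge0. Qed.

Lemma dotp_eq0 u : (dotp u u == 0) = (u == 0).
Proof.
rewrite psumr_eq0 => [|i _]; last by rewrite -expr2 sqr_ge0.
apply/allP/eqP => [u0|-> i _]; last by rewrite mxE mul0r eqxx.
apply/rowP => j; have := u0 j (mem_index_enum j).
by rewrite /= -expr2 sqrf_eq0 !mxE => /eqP.
Qed.

Lemma dotp_amgm u v : 2 * dotp u v <= dotp u u + dotp v v.
Proof. by have := dotp_ge0 (u - v); rewrite !(dotpBl, dotpBr) (dotpC v u); lra. Qed.

Lemma sqr_enorm u : enorm u ^+ 2 = dotp u u.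
Proof. by rewrite /enorm sqr_sqrtr // dotp_ge0. Qed.

Lemma enorm_ge0 u : 0 <= enorm u.
Proof. exact: sqrtr_ge0. Qed.

Lemma enorm_gt0 u : (0 < enorm u) = (u != 0).
Proof. by rewrite /enorm sqrtr_gt0 lt_def dotp_ge0 andbT dotp_eq0. Qed.

Lemma enorm0 : enorm (0 : 'rV[R]_n) = 0.
Proof. by rewrite /enorm dotp0l sqrtr0. Qed.

Lemma normr_le_enorm u : `|u| <= enorm u.
Proof.
rewrite [`|u|]mx_normrE; apply/bigmax_leP; split=> [|[i j] _ /=]; first exact: enorm_ge0.
rewrite (ord1 i) -[leLHS]sqrtr_sqr /enorm ler_sqrt ?dotp_ge0 // /dotp.
by rewrite (bigD1 j) //= -expr2 lerDl; apply: sumr_ge0 => k _; rewrite -expr2 sqr_ge0.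
Qed.

Lemma enorm_le_normr u : enorm u <= n.+1%:R * `|u|.
Proof.
have coord_le j : `|u ord0 j| <= `|u|.
  by rewrite [`|u|]mx_normrE; exact: (le_bigmax _ (fun ij => `|u ij.1 ij.2|) (ord0, j)).
rewrite -(@ler_pXn2r _ 2) ?nnegrE ?enorm_ge0 ?mulr_ge0 // sqr_enorm.
apply: (@le_trans _ _ (\sum_(i < n) `|u| ^+ 2)).
  apply: ler_sum => i _; apply: le_trans (ler_norm _) _.
  by rewrite normrM expr2 ler_pM.
rewrite sumr_const card_ord -[_ *+ n]mulr_natl exprMn ler_wpM2r ?sqr_ge0 //.
by rewrite -natrX ler_nat expnS; apply: leq_trans (leqnSn n) (leq_pmulr _ _).
Qed.

Lemma nbhs_enormP (x : 'rV[R]_n) (P : 'rV[R]_n -> Prop) :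
  nbhs x P <-> exists2 d, 0 < d & forall z, enorm (z - x) < d -> P z.
Proof.
split=> [/nbhs_ballP[e /= e0 sP]|[d d0 sP]].
  exists e => // z xz; apply: sP; rewrite -ball_normE /ball_ /= distrC.
  exact: le_lt_trans (normr_le_enorm _) xz.
apply/nbhs_ballP; exists (d / n.+1%:R) => /=; first by rewrite divr_gt0.
move=> z; rewrite -ball_normE /ball_ /= distrC => xz; apply: sP.
by apply: le_lt_trans (enorm_le_normr _) _; rewrite mulrC -ltr_pdivlMr.
Qed.

End InnerProduct.

Lemma dotp_mulmxl (R : realType) n m (x : 'rV[R]_n) (L : 'M[R]_(n, m)) (Y : 'rV[R]_m) :
  dotp (x *m L) Y = dotp x (Y *m L^T).
Proof.
rewrite /dotp; under eq_bigr do rewrite mxE big_distrl /=.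
rewrite exchange_big; apply: eq_bigr => i _; rewrite mxE big_distrr /=.
by apply: eq_bigr => j _; rewrite mxE -mulrA (mulrC (L i j)).
Qed.

Lemma dotp_additive_isometry (R : realType) p q (h : 'rV[R]_p -> 'rV[R]_q) :
  {morph h : x y / x + y} -> (forall x, enorm (h x) = enorm x) ->
  forall x y, dotp (h x) (h y) = dotp x y.
Proof.
move=> hD hN; have hN2 u : dotp (h u) (h u) = dotp u u by rewrite -!sqr_enorm hN.
move=> x y; have := hN2 (x + y).
by rewrite hD !(dotpDl, dotpDr) !hN2 (dotpC (h y)) (dotpC y); lra.
Qed.

Section Frechet.
Variables (R : realType) (n : nat).
Implicit Types (f : 'rV[R]_n -> \bar R) (x g z : 'rV[R]_n).

Definition frechet_quotient f x g z : \bar R :=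
  (`| f z - f x - (dotp (z - x) g)%:E | * ((enorm (z - x))^-1)%:E)%E.

Definition frechet_approx f x g (e d : R) : Prop :=
  forall z, z != x -> enorm (z - x) < d ->
    f z \is a fin_num /\ `|fine (f z) - fine (f x) - dotp (z - x) g| <= e * enorm (z - x).

Lemma frechet_gradE f x g :
  frechet_grad f x g = (f x \is a fin_num /\ frechet_quotient f x g @ x^' --> (0 : \bar R)).
Proof. by []. Qed.

Lemma frechet_quotientE f x g z : f x \is a fin_num -> f z \is a fin_num ->
  frechet_quotient f x g z = (`|fine (f z) - fine (f x) - dotp (z - x) g| / enorm (z - x))%:E.
Proof.
by move=> fx fz; rewrite /frechet_quotient -[f z]fineK // -[f x]fineK // -!EFinD abse_EFin -EFinM.
Qed.

Lemma frechet_quotient_fin f x g z : f x \is a fin_num -> z != x ->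
  frechet_quotient f x g z \is a fin_num -> f z \is a fin_num.
Proof.
move=> fx zx; have r0 : 0 < (enorm (z - x))^-1 by rewrite invr_gt0 enorm_gt0 subr_eq0.
rewrite /frechet_quotient; move: fx; case: (f x) => // ? _.
by case: (f z) => //=; rewrite gt0_mulye ?lte_fin.
Qed.

Lemma frechet_grad_approx f x g e : frechet_grad f x g -> 0 < e ->
  exists2 d, 0 < d & frechet_approx f x g e d.
Proof.
rewrite frechet_gradE => -[fx /fine_cvgP[qfin /cvgrPdist_le qcvg]] e0.
have : \forall z \near x^', frechet_quotient f x g z \is a fin_num /\
    `|0 - fine (frechet_quotient f x g z)| <= e.
  by near=> z; split; near: z; [exact: qfin | exact: qcvg].
rewrite near_withinE => /nbhs_enormP[d d0 near_x].
exists d => // z zx xz; have [qz] := near_x z xz zx.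
have fz := frechet_quotient_fin fx zx qz.
rewrite frechet_quotientE // sub0r normrN ger0_norm ?divr_ge0 ?enorm_ge0 //.
by rewrite ler_pdivrMr ?enorm_gt0 ?subr_eq0.
Unshelve. all: by end_near.
Qed.

Lemma approx_frechet_grad f x g : f x \is a fin_num ->
  (forall e, 0 < e -> exists2 d, 0 < d & frechet_approx f x g e d) -> frechet_grad f x g.
Proof.
move=> fx approx; rewrite frechet_gradE; split=> //; apply/fine_cvgP; split.
  have [d d0 near_x] := approx 1 ltr01.
  rewrite near_withinE; apply/nbhs_enormP; exists d => // z xz zx.
  by have [fz _] := near_x z zx xz; rewrite frechet_quotientE.
apply/cvgrPdist_le => e e0; have [d d0 near_x] := approx e e0.
rewrite near_withinE; apply/nbhs_enormP; exists d => // z xz zx.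
have [fz le_fz] := near_x z zx xz.
rewrite /= frechet_quotientE //= sub0r normrN ger0_norm ?divr_ge0 ?enorm_ge0 //.
by rewrite ler_pdivrMr ?enorm_gt0 ?subr_eq0.
Qed.

Lemma frechet_gradP f x g : frechet_grad f x g <->
  f x \is a fin_num /\ forall e, 0 < e -> exists2 d, 0 < d & frechet_approx f x g e d.
Proof.
split=> [gradf|[]]; last exact: approx_frechet_grad.
by split=> [|e]; [case: gradf | exact: frechet_grad_approx].
Qed.

End Frechet.

Definition tilt_slack (R : realType) n (e : R) (g : 'rV[R]_n) : R :=
  3 + 8 * dotp g g / e ^+ 2.

Lemma tilt_slack_ge1 (R : realType) n (e : R) (g : 'rV[R]_n) : 0 < e -> 1 <= tilt_slack e g.
Proof.
move=> e0; have : 0 <= 8 * dotp g g / e ^+ 2.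
  by rewrite divr_ge0 ?sqr_ge0 ?mulr_ge0 ?ler0n ?dotp_ge0.
by rewrite /tilt_slack; lra.
Qed.

Lemma tilt_slackN (R : realType) n (e : R) (g : 'rV[R]_n) :
  tilt_slack e (- g) = tilt_slack e g.
Proof. by rewrite /tilt_slack dotpNl dotpNr opprK. Qed.

Lemma sqr_enorm_le_tilt_slack (R : realType) n m (u g : 'rV[R]_n) (v h : 'rV[R]_m) e :
  0 < e -> dotp h h = dotp g g ->
  e * (enorm u ^+ 2 - enorm v ^+ 2) / 2 <= enorm v * (dotp u g - dotp v h) ->
  enorm u ^+ 2 <= enorm v ^+ 2 * tilt_slack e g.
Proof.
move=> e0 hg tilt.
have amgm_u := dotp_amgm ((e / 2) *: u) (enorm v *: g).
have amgm_v := dotp_amgm ((e / 2) *: v) (- (enorm v *: h)).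
rewrite !(dotpZl, dotpZr, dotpNl, dotpNr, opprK) hg -!sqr_enorm in amgm_u amgm_v.
rewrite -(ler_pM2l (exprn_gt0 2 e0)).
have -> : e ^+ 2 * (enorm v ^+ 2 * tilt_slack e g) =
    3 * e ^+ 2 * enorm v ^+ 2 + 8 * enorm v ^+ 2 * enorm g ^+ 2.
  by rewrite /tilt_slack -sqr_enorm; field; rewrite lt0r_neq0.
have := ler_wpM2l (ltW e0) tilt.
nra.
Qed.

Lemma tilt_lower_bound (R : realType) (p a b r d e : R) : 0 < d -> 0 < e ->
  - (e * r) <= p - a -> e * (r ^+ 2 - d ^+ 2) / 2 <= d * (a - b) ->
  - (e * d) <= p - b.
Proof.
move=> d0 e0 near_a tilt; rewrite -(ler_pM2r d0).
have : 0 <= e * (r - d) ^+ 2 by rewrite mulr_ge0 ?sqr_ge0 ?ltW.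
have := ler_wpM2r (ltW d0) near_a.
nra.
Qed.

Section SpectralDecompositionSystem.
Variables (R : realType) (n m : nat) (G : Type)
  (mul : G -> G -> G) (one : G) (inv : G -> G)
  (act : G -> 'rV[R]_n -> 'rV[R]_n) (gamma : 'rV[R]_m -> 'rV[R]_n)
  (A : Type) (Lam : A -> 'M[R]_(n, m)).
Hypothesis SDS : is_SDS mul one inv act gamma Lam.
Implicit Types (x g u v : 'rV[R]_n) (Y : 'rV[R]_m) (e : R).

Lemma act_dotp s u v : dotp (act s u) (act s v) = dotp u v.
Proof.
case: SDS => [[_ _ _ _ [_ actL actN]] _ _ _ _]; apply: dotp_additive_isometry => // x y.
by have := actL s 1 x y; rewrite !scale1r.
Qed.

Lemma act_invK s u : act (inv s) (act s u) = u.
Proof. by case: SDS => [[_ _ invK act1 [actM _ _]] _ _ _ _]; rewrite -actM (invK s).1 act1. Qed.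

Lemma enorm_Lam a u : enorm (u *m Lam a) = enorm u.
Proof. by case: SDS => _ LamN _ _ _; apply: LamN. Qed.

Lemma Lam_dotp a u v : dotp (u *m Lam a) (v *m Lam a) = dotp u v.
Proof.
by apply: (dotp_additive_isometry (h := mulmxr (Lam a))) => [x y|x];
  [exact: mulmxDl | exact: enorm_Lam].
Qed.

Lemma enorm_gamma Y : enorm (gamma Y) = enorm Y.
Proof. by case: SDS => _ _ _ /(_ Y)[a {2}->] _; rewrite enorm_Lam. Qed.

Lemma gamma_Lam_orbit a x : exists s, gamma (x *m Lam a) = act s x.
Proof. by case: SDS => _ _ [tau [_ tau_orbit gammaL]] _ _; rewrite gammaL; apply: tau_orbit. Qed.

Lemma gamma_orbit_tilt a x g Y e : 0 < e -> exists s,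
  e * (enorm (act s (gamma Y) - x) ^+ 2 - enorm (Y - x *m Lam a) ^+ 2) / 2 <=
  enorm (Y - x *m Lam a) * (dotp (act s (gamma Y) - x) g - dotp (Y - x *m Lam a) (g *m Lam a)).
Proof.
move=> e0; set d := enorm (Y - x *m Lam a).
have [s gamma_s] := gamma_Lam_orbit a (x + (d / e) *: g).
exists (inv s); set w := act (inv s) (gamma Y).
have C : dotp Y ((x + (d / e) *: g) *m Lam a) <= dotp w (x + (d / e) *: g).
  case: SDS => _ _ _ _ /(_ Y ((x + (d / e) *: g) *m Lam a)).
  by rewrite gamma_s -(act_dotp (inv s)) act_invK.
have ed t : e * (d / e * t) = d * t by field; rewrite lt0r_neq0.
move: (ler_wpM2l (ltW e0) C).
rewrite mulmxDl -scalemxAl !(dotpDr, dotpZr) !mulrDr !ed.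
have dd : d ^+ 2 = dotp (Y - x *m Lam a) (Y - x *m Lam a) by rewrite sqr_enorm.
rewrite sqr_enorm dd !(dotpBl, dotpBr) /w act_dotp -!sqr_enorm enorm_gamma !sqr_enorm !Lam_dotp.
rewrite (dotpC x (act _ _)) (dotpC (x *m Lam a) Y).
lra.
Qed.

Lemma gamma_orbit_tilt_near a x g Y e rho : 0 < e -> 0 <= rho ->
  enorm (Y - x *m Lam a) ^+ 2 * tilt_slack e g < rho ^+ 2 -> exists s,
  enorm (act s (gamma Y) - x) < rho /\
  e * (enorm (act s (gamma Y) - x) ^+ 2 - enorm (Y - x *m Lam a) ^+ 2) / 2 <=
  enorm (Y - x *m Lam a) * (dotp (act s (gamma Y) - x) g - dotp (Y - x *m Lam a) (g *m Lam a)).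
Proof.
move=> e0 rho0 d_small; have [s tilt] := gamma_orbit_tilt a x g Y e0.
exists s; split=> //; rewrite -(ltr_pXn2r (ltn0Sn 1)) ?nnegrE ?enorm_ge0 //.
exact: le_lt_trans (sqr_enorm_le_tilt_slack e0 (Lam_dotp a g g) tilt) d_small.
Qed.

Lemma gamma_lower_estimate (f : 'rV[R]_n -> R) a x g e rho Y :
  (forall s z, f (act s z) = f z) -> 0 < e -> 0 <= rho ->
  (forall z, enorm (z - x) < rho -> - (e * enorm (z - x)) <= f z - f x - dotp (z - x) g) ->
  0 < enorm (Y - x *m Lam a) -> enorm (Y - x *m Lam a) ^+ 2 * tilt_slack e g < rho ^+ 2 ->
  - (e * enorm (Y - x *m Lam a)) <= f (gamma Y) - f x - dotp (Y - x *m Lam a) (g *m Lam a).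
Proof.
move=> f_inv e0 rho0 f_lower d0 d_small.
have [s [w_near tilt]] := gamma_orbit_tilt_near e0 rho0 d_small.
by rewrite -(f_inv s); apply: tilt_lower_bound d0 e0 (f_lower _ w_near) tilt.
Qed.

Variable phi : 'rV[R]_n -> \bar R.
Hypothesis phi_inv : S_invariant act phi.

Lemma phi_gamma_Lam a x : phi (gamma (x *m Lam a)) = phi x.
Proof. by have [s ->] := gamma_Lam_orbit a x; apply: phi_inv. Qed.

Lemma frechet_grad_Lam a x G0 : frechet_grad (phi \o gamma) (x *m Lam a) G0 ->
  frechet_grad phi x (G0 *m (Lam a)^T).
Proof.
move=> /frechet_gradP[fx approx]; apply/frechet_gradP; split=> [|e e0].
  by rewrite -(phi_gamma_Lam a).
have [d d0 approx_d] := approx e e0; exists d => // z zx xz.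
have zxL : z *m Lam a != x *m Lam a.
  by rewrite -subr_eq0 -mulmxBl -enorm_gt0 enorm_Lam enorm_gt0 subr_eq0.
have := approx_d _ zxL; rewrite -mulmxBl enorm_Lam => /(_ xz).
by rewrite /= !phi_gamma_Lam dotp_mulmxl.
Qed.

Lemma frechet_grad_gamma a x g : frechet_grad phi x g ->
  frechet_grad (phi \o gamma) (x *m Lam a) (g *m Lam a).
Proof.
move=> /frechet_gradP[fx approx]; apply/frechet_gradP; split=> [|e e0].
  by rewrite /= phi_gamma_Lam.
have [rho rho0 approx_rho] := approx e e0.
have K1 := tilt_slack_ge1 g e0.
have K0 : 0 < tilt_slack e g by apply: lt_le_trans K1.
exists (rho / tilt_slack e g) => [|Y YX]; first by rewrite divr_gt0.
set d := enorm (Y - x *m Lam a); rewrite ltr_pdivlMr // => dK.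
have d0 : 0 < d by rewrite enorm_gt0 subr_eq0.
have d_small : d ^+ 2 * tilt_slack e g < rho ^+ 2.
  have : (d * tilt_slack e g) ^+ 2 < rho ^+ 2.
    by rewrite ltr_pXn2r ?nnegrE ?mulr_ge0 ?ltW.
  by rewrite exprMn; nra.
have phi_bound z : enorm (z - x) < rho -> phi z \is a fin_num /\
    `|fine (phi z) - fine (phi x) - dotp (z - x) g| <= e * enorm (z - x).
  have [-> _|zx] := eqVneq z x; last exact: approx_rho.
  by rewrite !subrr dotp0l enorm0 subr0 normr0 mulr0.
have [s [w_near _]] := gamma_orbit_tilt_near e0 (ltW rho0) d_small.
split; first by rewrite /= -(phi_inv s); exact: (phi_bound _ w_near).1.
have lower z : enorm (z - x) < rho ->
    - (e * enorm (z - x)) <= fine (phi z) - fine (phi x) - dotp (z - x) g.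
  by move=> /phi_bound[_ /ler_normlP[]]; rewrite lerNl.
have upper z : enorm (z - x) < rho ->
    - (e * enorm (z - x)) <= - fine (phi z) - - fine (phi x) - dotp (z - x) (- g).
  by move=> /phi_bound[_ /ler_normlP[]]; rewrite dotpNr; lra.
have fine_inv s' z : fine (phi (act s' z)) = fine (phi z) by rewrite phi_inv.
have neg_fine_inv s' z : - fine (phi (act s' z)) = - fine (phi z) by rewrite phi_inv.
rewrite /= phi_gamma_Lam ler_norml; apply/andP; split.
  exact: (gamma_lower_estimate (f := fine \o phi) fine_inv e0 (ltW rho0) lower d0 d_small).
have := gamma_lower_estimate neg_fine_inv e0 (ltW rho0) upper d0.
by rewrite tilt_slackN mulNmx dotpNr -/d => /(_ d_small); lra.
Qed.

End SpectralDecompositionSystem.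

Theorem corollary4p8 (R : realType) (n m : nat) (G : Type)
  (mul : G -> G -> G) (one : G) (inv : G -> G)
  (act : G -> 'rV[R]_n -> 'rV[R]_n) (gamma : 'rV[R]_m -> 'rV[R]_n)
  (A : Type) (Lam : A -> 'M[R]_(n, m))
  (HSDS : is_SDS mul one inv act gamma Lam)
  (Hclosed : closed (range Lam))
  (phi : 'rV[R]_n -> \bar R) (Hphi : S_invariant act phi) :
  (forall (x : 'rV[R]_n) (a : A), phi x \is a fin_num ->
     (frechet_diff (phi \o gamma) (x *m Lam a) <-> frechet_diff phi x) /\
     (forall g, frechet_grad phi x g ->
        frechet_grad (phi \o gamma) (x *m Lam a) (g *m Lam a)))
  /\
  (forall X : 'rV[R]_m, phi (gamma X) \is a fin_num ->
     (frechet_diff (phi \o gamma) X <-> frechet_diff phi (gamma X)) /\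
     (forall g, frechet_grad phi (gamma X) g ->
        forall a : A, X = gamma X *m Lam a ->
          frechet_grad (phi \o gamma) X (g *m Lam a))).
Proof.
have diff_Lam x a : frechet_diff (phi \o gamma) (x *m Lam a) <-> frechet_diff phi x.
  split=> -[g].
    by move=> /(frechet_grad_Lam HSDS Hphi); exists (g *m (Lam a)^T).
  by move=> /(frechet_grad_gamma HSDS Hphi a); exists (g *m Lam a).
split=> [x a _|X _].
  by split=> [|g /(frechet_grad_gamma HSDS Hphi a)//]; exact: diff_Lam.
have [a Xa] : exists a, X = gamma X *m Lam a by case: HSDS => _ _ _ /(_ X).
split; first by rewrite [in frechet_diff _ X]Xa diff_Lam.
by move=> g gradg b Xb; rewrite Xb; apply: (frechet_grad_gamma HSDS Hphi b gradg).
Qed.
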